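(* Let $s\in S$, let $A_s=((p_1,p_2),q_1,q_2,0)$ and $v=v_s$, and assume that the loop $A_s\xrightarrow{v}A_s$ forms a Hamiltonian cycle of $s$. Let $x,y,z\in\Sigma^*$ and $(d_1,d_2)\in Q_1\times Q_2$ satisfy: 1. $\kappa\le|x|<|v|+\kappa$ and $x$ is a prefix of some word in $v^+$; 2. $0\le|y|<|v|$, and $xy$ is the longest common prefix of $xyz$ and some word in $v^+$ (i.e. $xy$ is a prefix of a word in $v^+$, and no prefix of $xyz$ longer than $xy$ is a prefix of a word in $v^+$); 3. $z\in B(c_1,c_2,d_1,d_2)$, where $c_1=p_1\cdot xy$ and $c_2=p_2\cdot x$; 4. $q_1=d_1\cdot\bar x\bar v^{n_1}$, and in the run of $\mathcal{A}_1$ from $d_1$ on $\bar x\bar v^{n_1}$ the state reached after exactly $\kappa$ letters lies in $F_1$, while no state reached after more than $\kappa$ letters lies in $F_1$; 5. $q_2=d_2\cdot\bar y\bar x\bar v^{n_2}$, and, with $e_2=d_2\cdot\bar y\bar x$, no state reached from $e_2$ in $\mathcal{A}_2$ after reading a nonempty prefix of $\bar v^{n_2}$ lies in $F_2$. If $\mathcal{H}_\kappa(L_1,L_2)$ is regular, then there is a factorization $xyz\bar x\bar v=\mu\delta\beta\bar\delta\bar\mu$ with $|\delta|=\kappa$ and $p_2\cdot\mu\delta\bar\beta\bar\delta\in F_2$.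
   Context: $\Sigma$ is a finite alphabet with at least two letters with an involution $a\mapsto\bar a$ ($\bar{\bar a}=a$), extended to words by $\overline{a_1\cdots a_m}=\bar a_m\cdots\bar a_1$ and to languages elementwise. $\kappa$ is a fixed positive integer. $\mathcal{H}_\kappa(L_1,L_2)=\{\gamma\alpha\beta\bar\alpha\bar\gamma:|\alpha|\ge\kappa,\ \gamma\alpha\beta\bar\alpha\in L_1\text{ or }\alpha\beta\bar\alpha\bar\gamma\in L_2\}$. $L_1,L_2$ are regular; $\mathcal{A}_1=(Q_1,\Sigma,E_1,\{q_{01}\},F_1)$ is a complete DFA accepting $L_1$, $\mathcal{A}_2=(Q_2,\Sigma,E_2,\{q_{02}\},F_2)$ a complete DFA accepting $\overline{L_2}$; $n_i=|Q_i|$; $p\cdot w$ is the state reached from $p$ on $w$. Construction of $\mathcal{A}$: $Q_{12}=\{(q_{01}\cdot w,q_{02}\cdot w):w\in\Sigma^*\}$ with $(p_1,p_2)\cdot w=(p_1\cdot w,p_2\cdot w)$. For $(p_1,p_2,q_1,q_2)\in Q_1\times Q_2\times Q_1\times Q_2$ let $B(p_1,p_2,q_1,q_2)=\{w:p_1\cdot w=q_1,\ p_2\cdot\bar w=q_2\}$; the quadruple is a basic bridge if this set is nonempty. States of $\mathcal{A}$ are all $((p_1,p_2),q_1,q_2,\ell)$ with $(p_1,p_2)\in Q_{12}$, $q_i\in Q_i$, $\ell\in\{0,\dots,\kappa\}$, $(p_1,p_2,q_1,q_2)$ a basic bridge. For $a\in\Sigma$, $P\in Q_{12}$, $q_i\in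 Q_i$, there is an $a$-arc from $(P,q_1\cdot\bar a,q_2\cdot\bar a,\ell)$ to $(P\cdot a,q_1,q_2,\ell')$, provided both are states, exactly when: $\ell=\ell'=0$ and $q_1\cdot\bar a\notin F_1$, $q_2\cdot\bar a\notin F_2$; or $\ell=0,\ell'=1$ and ($q_1\cdot\bar a\in F_1$ or $q_2\cdot\bar a\in F_2$); or $1\le\ell<\kappa$ and $\ell'=\ell+1$. Initial states: $((q_{01},q_{02}),q_1',q_2',0)$; final states: those with $\ell=\kappa$. $\mathcal{A}$ is trimmed: states not reachable from an initial state, or from which no final state is reachable, are removed. $S$ is the set of non-trivial strongly connected components of $\mathcal{A}$ (those containing a path $A\xrightarrow{v}A$ with $v$ nonempty); all their states lie on level $\ell=0$. A linear order on the states of $\mathcal{A}$ is fixed; $A_s$ is the least state in $s$, and $v_s$ is a shortest nonempty word with a path $A_s\xrightarrow{v_s}A_s$. *)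

From mathcomp Require Import all_boot.
Set Implicit Arguments. Unset Strict Implicit. Unset Printing Implicit Defensive.

Section Words.
Variable Sigma : finType.
Variable bar : Sigma -> Sigma.

Definition wbar (w : seq Sigma) : seq Sigma := rev (map bar w).

Definition wpow (w : seq Sigma) (n : nat) : seq Sigma := flatten (nseq n w).

Definition pref_vplus (v u : seq Sigma) : Prop :=
  exists n, 0 < n /\ prefix u (wpow v n).

Definition dot (Q : Type) (t : Q -> Sigma -> Q) (p : Q) (w : seq Sigma) : Q :=
  foldl t p w.

Definition regular (L : seq Sigma -> Prop) : Prop :=
  exists (Q : finType) (t : Q -> Sigma -> Q) (q0 : Q) (F : pred Q),
    forall w, L w <-> F (dot t q0 w).

Definition Hk (kappa : nat) (L1 L2 : seq Sigma -> Prop) (w : seq Sigma) : Prop :=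
  exists gamma alpha beta,
    w = gamma ++ alpha ++ beta ++ wbar alpha ++ wbar gamma /\
    kappa <= size alpha /\
    (L1 (gamma ++ alpha ++ beta ++ wbar alpha) \/
     L2 (alpha ++ beta ++ wbar alpha ++ wbar gamma)).

Section Construction.
Variable kappa : nat.
Variables (Q1 Q2 : finType).
Variables (t1 : Q1 -> Sigma -> Q1) (t2 : Q2 -> Sigma -> Q2).
Variables (q01 : Q1) (q02 : Q2).
Variables (F1 : pred Q1) (F2 : pred Q2).

(* L1 = L(A1);  A2 accepts bar L2, i.e. w \in L2 iff bar w \in L(A2) *)
Definition L1 (w : seq Sigma) : Prop := F1 (dot t1 q01 w).
Definition L2 (w : seq Sigma) : Prop := F2 (dot t2 q02 (wbar w)).

Definition inQ12 (P : Q1 * Q2) : Prop :=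
  exists w, P = (dot t1 q01 w, dot t2 q02 w).

Definition inB (p1 : Q1) (p2 : Q2) (q1 : Q1) (q2 : Q2) (w : seq Sigma) : Prop :=
  dot t1 p1 w = q1 /\ dot t2 p2 (wbar w) = q2.

Definition basic_bridge (p1 : Q1) (p2 : Q2) (q1 : Q1) (q2 : Q2) : Prop :=
  exists w, inB p1 p2 q1 q2 w.

Definition St : Type := ((Q1 * Q2) * Q1 * Q2 * nat)%type.

Definition mkSt (p1 : Q1) (p2 : Q2) (q1 : Q1) (q2 : Q2) (l : nat) : St :=
  ((p1, p2), q1, q2, l).

Definition isSt (A : St) : Prop :=
  let: (P, q1, q2, l) := A in
  inQ12 P /\ basic_bridge P.1 P.2 q1 q2 /\ l <= kappa.

Definition arc (A : St) (a : Sigma) (B : St) : Prop :=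
  isSt A /\ isSt B /\
  exists (P : Q1 * Q2) (q1 : Q1) (q2 : Q2) (l l' : nat),
    A = (P, t1 q1 (bar a), t2 q2 (bar a), l) /\
    B = ((t1 P.1 a, t2 P.2 a), q1, q2, l') /\
    ((l = 0 /\ l' = 0 /\ ~~ F1 (t1 q1 (bar a)) /\ ~~ F2 (t2 q2 (bar a))) \/
     (l = 0 /\ l' = 1 /\ (F1 (t1 q1 (bar a)) || F2 (t2 q2 (bar a)))) \/
     (1 <= l < kappa /\ l' = l.+1)).

Fixpoint rpath (A : St) (w : seq Sigma) (B : St) : Prop :=
  match w with
  | [::] => A = B
  | a :: w' => exists C, arc A a C /\ rpath C w' B
  end.

Definition initial (A : St) : Prop :=
  isSt A /\ exists q1 q2, A = ((q01, q02), q1, q2, 0).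

Definition final (A : St) : Prop :=
  isSt A /\ A.2 = kappa.

Definition trimmed (A : St) : Prop :=
  isSt A /\
  (exists I w, initial I /\ rpath I w A) /\
  (exists w Fn, rpath A w Fn /\ final Fn).

Definition tarc (A : St) (a : Sigma) (B : St) : Prop :=
  trimmed A /\ trimmed B /\ arc A a B.

(* path of the trimmed automaton from A to B labelled w; ss lists the
   states reached after each letter (so size ss = size w, last ss = B) *)
Fixpoint tpathS (A : St) (w : seq Sigma) (ss : seq St) (B : St) : Prop :=
  match w, ss with
  | [::], [::] => A = B
  | a :: w', C :: ss' => tarc A a C /\ tpathS C w' ss' B
  | _, _ => False
  end.

Definition treach (A B : St) : Prop := exists w ss, tpathS A w ss B.

Definition nontrivial_scc (s : St -> Prop) : Prop :=
  (exists A, trimmed A /\ s A /\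
     forall B, s B <-> (trimmed B /\ treach A B /\ treach B A)) /\
  (exists A w ss, s A /\ w != [::] /\ tpathS A w ss A).

Definition shortest_loop (A : St) (v : seq Sigma) : Prop :=
  v != [::] /\ (exists ss, tpathS A v ss A) /\
  forall w ss, w != [::] -> tpathS A w ss A -> size v <= size w.

Definition hamiltonian_loop (s : St -> Prop) (A : St) (v : seq Sigma) : Prop :=
  exists ss, tpathS A v ss A /\ uniq ss /\ forall B, s B <-> B \in ss.

End Construction.
End Words.

(* The loop at A_s stays on level 0, so p_i . v = p_i and q_i . bar v = q_i, and the runs of
   A_1, A_2 from q_1, q_2 on bar v never meet F_1, F_2; the same holds on bar w0 for the label w0
   of a path from an initial state to A_s.  Nothing else about s, v or the order is needed.
   Since x is a prefix of v^e x, taking alpha to be the last kappa letters of x shows through L1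
   that w0 v^n v^e x y z bar x bar(w0 v^n) lies in H_kappa; if H_kappa is regular, pumping down
   yields Z = w0 v^a T bar(w0 v^a) in H_kappa, with T = x y z bar x bar v and a >= |Q1|, |Q2|.
   Write Z = gamma alpha beta bar alpha bar gamma.  If gamma alpha beta bar alpha were in L1,
   the run of A_1 from d_1 would force |gamma alpha| >= |w0 v^a x v|, so the first |xy| + 1
   letters of T would agree with those of bar T = v x ..., a prefix of a word of v^+,
   against the maximality of xy.  So the L2 alternative holds; the run of A_2 from e_2 forces
   gamma to contain w0 v^a, and peeling it off factorizes T. *)

From mathcomp Require Import all_boot zify.
Set Implicit Arguments. Unset Strict Implicit. Unset Printing Implicit Defensive.

Lemma pigeonhole_nat (Q : finType) (f : nat -> Q) :
  exists i j, i < j <= #|Q| /\ f i = f j.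
Proof.
case: (boolP (injectiveb (fun i : 'I_#|Q|.+1 => f i))) => [/injectiveP inj_f | ].
  by have := leq_card _ inj_f; rewrite card_ord ltnn.
move=> /injectivePn[i [j neq_ij /= Eij]].
case: (ltngtP i j) => [lt_ij | lt_ji | /val_inj eq_ij]; last by rewrite eq_ij eqxx in neq_ij.
- by exists i, j; rewrite lt_ij -ltnS ltn_ord.
- by exists j, i; rewrite lt_ji -ltnS ltn_ord.
Qed.

Section Words.
Variables (Sigma : finType) (bar : Sigma -> Sigma).
Hypothesis bar_inv : involutive bar.
Local Notation wb := (wbar bar).

Lemma dot_cat (Q : Type) (t : Q -> Sigma -> Q) q (u w : seq Sigma) :
  dot t q (u ++ w) = dot t (dot t q u) w.
Proof. by rewrite /dot foldl_cat. Qed.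

Lemma wbar_cat (u w : seq Sigma) : wb (u ++ w) = wb w ++ wb u.
Proof. by rewrite /wbar map_cat rev_cat. Qed.

Lemma wbar_cons a (w : seq Sigma) : wb (a :: w) = wb w ++ [:: bar a].
Proof. by rewrite /wbar /= rev_cons cats1. Qed.

Lemma size_wbar (w : seq Sigma) : size (wb w) = size w.
Proof. by rewrite /wbar size_rev size_map. Qed.

Lemma wbarK : involutive wb.
Proof. by move=> w; rewrite /wbar map_rev revK -map_comp (eq_map bar_inv) map_id. Qed.

Lemma wpowS (v : seq Sigma) n : wpow v n.+1 = v ++ wpow v n.
Proof. by []. Qed.

Lemma wpowD (v : seq Sigma) m n : wpow v (m + n) = wpow v m ++ wpow v n.
Proof. by elim: m => [|m IH] //=; rewrite addSn !wpowS IH catA. Qed.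

Lemma wpowSr (v : seq Sigma) n : wpow v n.+1 = wpow v n ++ v.
Proof. by rewrite -addn1 wpowD /wpow /= cats0. Qed.

Lemma size_wpow (v : seq Sigma) n : size (wpow v n) = n * size v.
Proof. by elim: n => [|n IH] //=; rewrite wpowS size_cat IH mulSn. Qed.

Lemma wbar_wpow (v : seq Sigma) n : wb (wpow v n) = wpow (wb v) n.
Proof. by elim: n => [|n IH] //=; rewrite wpowS wbar_cat IH -wpowSr. Qed.

Lemma dot_wpow (Q : Type) (t : Q -> Sigma -> Q) q (v : seq Sigma) n :
  dot t q v = q -> dot t q (wpow v n) = q.
Proof. by move=> qv; elim: n => [|n IH] //; rewrite wpowS dot_cat qv. Qed.

Lemma pref_vplus_take (v x s : seq Sigma) k :
  pref_vplus v x -> k <= size v + size x -> pref_vplus v (take k (v ++ x ++ s)).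
Proof.
move=> [n [_ /prefixP[r vn]]] le_k; exists n.+1; split => //.
rewrite catA takel_cat ?size_cat //; apply: prefix_trans (prefix_take _ _) _.
by rewrite wpowS vn catA prefix_prefix.
Qed.

Lemma pref_vplus_wpow_cat (v x : seq Sigma) e :
  pref_vplus v x -> prefix x (wpow v e ++ x).
Proof.
move=> [n [_ /prefixP[r vn]]]; rewrite prefixE; apply/eqP.
have E : take (size x) (wpow v e ++ x ++ r) = x.
  by rewrite -vn -wpowD addnC wpowD vn -catA take_size_cat.
by rewrite -[RHS]E catA [RHS]takel_cat // size_cat leq_addl.
Qed.

Definition avoids (Q : Type) (t : Q -> Sigma -> Q) (F : pred Q) (q : Q) (lo : nat)
    (w : seq Sigma) : Prop :=
  forall k, lo < k <= size w -> ~~ F (dot t q (take k w)).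

Section Avoids.
Variables (Q : Type) (t : Q -> Sigma -> Q) (F : pred Q).

Lemma avoids_cat q lo (u w : seq Sigma) :
  avoids t F q lo u -> avoids t F (dot t q u) 0 w -> avoids t F q lo (u ++ w).
Proof.
move=> avu avw k /andP[lo_k]; rewrite size_cat take_cat => le_k.
case: ltnP => [lt_ku|le_uk]; first by rewrite avu // lo_k ltnW.
case: (ltngtP k (size u)) le_uk => // [lt_uk|eq_ku] _.
  by rewrite dot_cat avw //; apply/andP; split; lia.
by rewrite eq_ku subnn take0 cats0 -{1}(take_size u) avu // -eq_ku lo_k leqnn.
Qed.

Lemma avoids_wpow q (v : seq Sigma) n :
  dot t q v = q -> avoids t F q 0 v -> avoids t F q 0 (wpow v n).
Proof.
move=> qv avv; elim: n => [|n IH]; first by move=> k; rewrite /wpow /=; lia.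
by rewrite wpowS; apply: avoids_cat; rewrite // qv.
Qed.

Lemma avoids_seq1 q a : ~~ F (t q a) -> avoids t F q 0 [:: a].
Proof. by move=> Fa [|[|k]]. Qed.

Lemma accepting_prefix_size q lo (pre rest w : seq Sigma) :
  avoids t F (dot t q pre) lo rest -> prefix w (pre ++ rest) -> F (dot t q w) ->
  size w <= size pre + lo.
Proof.
move=> avr /prefixP[w' E] Fw; rewrite leqNgt; apply/negP => long_w.
have sE : size pre + size rest = size w + size w' by rewrite -!size_cat E.
have Ew : w = pre ++ take (size w - size pre) rest.
  have le_pw : size pre <= size w by lia.
  by have := congr1 (take (size w)) E; rewrite take_size_cat // take_cat ltnNge le_pw.
move: Fw; rewrite Ew dot_cat; apply/negP/avr; lia.
Qed.

End Avoids.

Section Palindromes.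
Variables (P T ga al be : seq Sigma).
Hypothesis EZ : P ++ T ++ wb P = ga ++ al ++ be ++ wb al ++ wb ga.

Lemma Hk_mirror m :
  size P + m <= size ga + size al -> take m T = take m (wb T) /\ m.*2 <= size T.
Proof.
move=> le_m.
have EZb : P ++ wb T ++ wb P = ga ++ al ++ wb be ++ wb al ++ wb ga.
  by have := congr1 wb EZ; rewrite !wbar_cat !wbarK -!catA.
have sZ : (size P).*2 + size T = (size ga).*2 + (size al).*2 + size be.
  by have := congr1 size EZ; rewrite !size_cat !size_wbar; lia.
have le_mT : m <= size T by lia.
have front S X : m <= size S -> take (size P + m) (P ++ S ++ X) = P ++ take m S.
  by move=> le_mS; rewrite take_cat ltnNge leq_addr addKn takel_cat.
have back X : take (size P + m) (ga ++ al ++ X) = take (size P + m) (ga ++ al).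
  by rewrite catA takel_cat // size_cat.
have E1 := front _ (wb P) le_mT; rewrite EZ back in E1.
have E2 := front (wb T) (wb P); rewrite size_wbar EZb back in E2.
split; last by lia.
by have := congr1 (drop (size P)) (etrans (esym E1) (E2 le_mT)); rewrite !drop_size_cat.
Qed.

Lemma Hk_peel :
  size P <= size ga -> exists g, ga = P ++ g /\ T = g ++ al ++ be ++ wb al ++ wb g.
Proof.
move=> le_P; set g := drop (size P) ga.
have Ega : ga = P ++ g.
  have := congr1 (take (size P)) EZ; rewrite take_size_cat // takel_cat // => EP.
  by rewrite -{1}(cat_take_drop (size P) ga) -EP.
exists g; split=> //.
have E : T ++ wb P = (g ++ al ++ be ++ wb al ++ wb g) ++ wb P.
  by have := congr1 (drop (size P)) EZ; rewrite Ega wbar_cat -!catA !drop_size_cat.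
have sE : size T = size (g ++ al ++ be ++ wb al ++ wb g).
  by have := congr1 size E; rewrite !size_cat; lia.
by have := congr1 (take (size T)) E; rewrite take_size_cat // take_size_cat.
Qed.

End Palindromes.

Lemma Hk_trim (ga al be : seq Sigma) k : k <= size al ->
  exists de be', size de = k /\
    ga ++ al ++ be ++ wb al ++ wb ga = ga ++ de ++ be' ++ wb de ++ wb ga /\
    ga ++ al ++ wb be ++ wb al = ga ++ de ++ wb be' ++ wb de.
Proof.
move=> le_k; have [de [r [-> sde]]] : exists de r, al = de ++ r /\ size de = k.
  by exists (take k al), (drop k al); rewrite cat_take_drop size_takel.
by exists de, (r ++ be ++ wb r); rewrite !wbar_cat wbarK -!catA.
Qed.

Lemma regular_pump (L : seq Sigma -> Prop) (u v : seq Sigma) N : regular L ->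
  exists a e, N <= a /\
    forall s, L (u ++ wpow v (a.+1 + e) ++ s) -> L (u ++ wpow v a ++ s).
Proof.
move=> [Q [t [q0 [F HL]]]].
have [i [j [/andP[lt_ij _] /= Eij]]] :=
  pigeonhole_nat (fun n => dot t q0 (u ++ wpow v (N + n))).
exists (N + i), (j - i.+1); split; first exact: leq_addr.
have -> : (N + i).+1 + (j - i.+1) = N + j by lia.
by move=> s; rewrite !HL !catA !(dot_cat _ _ (_ ++ _)) Eij.
Qed.

Section Automaton.
Variables (kappa : nat) (Q1 Q2 : finType) (t1 : Q1 -> Sigma -> Q1) (t2 : Q2 -> Sigma -> Q2).
Variables (q01 : Q1) (q02 : Q2) (F1 : pred Q1) (F2 : pred Q2).
Local Notation rpath := (rpath bar kappa t1 t2 q01 q02 F1 F2).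

Lemma tpathS_rpath A w ss B :
  tpathS bar kappa t1 t2 q01 q02 F1 F2 A w ss B -> rpath A w B.
Proof.
elim: w A ss => [|a w IH] A [|C ss] //= [[_ [_ arcAC]] pathC].
by exists C; split; last exact: IH pathC.
Qed.

Lemma rpath_level0 w A P' r1 r2 : rpath A w (P', r1, r2, 0) ->
  exists P : Q1 * Q2,
    A = (P, dot t1 r1 (wb w), dot t2 r2 (wb w), 0) /\
    (dot t1 P.1 w, dot t2 P.2 w) = P' /\
    avoids t1 F1 r1 0 (wb w) /\ avoids t2 F2 r2 0 (wb w).
Proof.
elim: w A => [|a w IH] A /=.
  by move=> ->; exists P'; do !split => //; [case: P' | move=> [|k] | move=> [|k]].
move=> [C [[_ [_ [P [c1 [c2 [l [l' [-> [EC arc_cond]]]]]]]]] pathC]].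
have [PC [EC' [EPC [av1 av2]]]] := IH C pathC.
rewrite EC' in EC; case: EC => EPa Ec1 Ec2 El'; rewrite EPa /= in EPC.
have [-> [F1a F2a]] : l = 0 /\ ~~ F1 (t1 c1 (bar a)) /\ ~~ F2 (t2 c2 (bar a)).
  by case: arc_cond => [[-> [_ [F1a F2a]]] | [[_ [l'1 _]] | [_ l'S]]]; [ | lia | lia].
exists P; rewrite wbar_cons; do !split => //.
- by rewrite !dot_cat Ec1 Ec2.
- by apply: avoids_cat; rewrite // Ec1; exact: avoids_seq1.
- by apply: avoids_cat; rewrite // Ec2; exact: avoids_seq1.
Qed.

End Automaton.

Section Factorization.
Variables (kappa : nat) (Q1 Q2 : finType) (t1 : Q1 -> Sigma -> Q1) (t2 : Q2 -> Sigma -> Q2).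
Variables (q01 : Q1) (q02 : Q2) (F1 : pred Q1) (F2 : pred Q2).
Variables (p1 : Q1) (p2 : Q2) (q1 : Q1) (q2 : Q2) (d1 : Q1) (d2 : Q2).
Variables (w0 v x y z : seq Sigma).
Hypotheses (q01_w0 : dot t1 q01 w0 = p1) (q02_w0 : dot t2 q02 w0 = p2).
Hypotheses (p1_v : dot t1 p1 v = p1) (p2_v : dot t2 p2 v = p2).
Hypotheses (q1_v : dot t1 q1 (wb v) = q1) (q2_v : dot t2 q2 (wb v) = q2).
Hypotheses (q1_avoids_v : avoids t1 F1 q1 0 (wb v)) (q2_avoids_v : avoids t2 F2 q2 0 (wb v)).
Hypotheses (q1_avoids_w0 : avoids t1 F1 q1 0 (wb w0)) (q2_avoids_w0 : avoids t2 F2 q2 0 (wb w0)).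
Hypotheses (kappa_x : kappa <= size x) (x_pref : pref_vplus v x) (y_v : size y < size v).
Hypothesis xy_maximal :
  forall u, prefix u (x ++ y ++ z) -> size (x ++ y) < size u -> ~ pref_vplus v u.
Hypotheses (xyz_d1 : dot t1 (dot t1 p1 (x ++ y)) z = d1)
  (xz_d2 : dot t2 (dot t2 p2 x) (wb z) = d2).
Hypotheses (d1_q1 : dot t1 d1 (wb x ++ wpow (wb v) #|Q1|) = q1)
  (d1_accepts : F1 (dot t1 d1 (take kappa (wb x))))
  (d1_avoids : avoids t1 F1 d1 kappa (wb x ++ wpow (wb v) #|Q1|)).
Let e2 := dot t2 d2 (wb y ++ wb x).
Hypotheses (e2_q2 : dot t2 e2 (wpow (wb v) #|Q2|) = q2)
  (e2_avoids : avoids t2 F2 e2 0 (wpow (wb v) #|Q2|)).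

Local Notation H := (Hk bar kappa (L1 t1 q01 F1) (L2 bar t2 q02 F2)).
Local Notation T := (x ++ y ++ z ++ wb x ++ wb v).
Local Notation P a := (w0 ++ wpow v a).

Lemma d1_avoids_tail m :
  avoids t1 F1 d1 kappa (wb x ++ wpow (wb v) (#|Q1| + m) ++ wb w0).
Proof.
rewrite wpowD -catA catA; apply: avoids_cat => //; rewrite d1_q1.
by apply: avoids_cat; [exact: avoids_wpow | rewrite dot_wpow].
Qed.

Lemma e2_avoids_tail m : avoids t2 F2 e2 0 (wpow (wb v) (#|Q2| + m) ++ wb w0).
Proof.
rewrite wpowD -catA; apply: avoids_cat => //; rewrite e2_q2.
by apply: avoids_cat; [exact: avoids_wpow | rewrite dot_wpow].
Qed.

Lemma pumped_in_H n e : H (P n ++ wpow v e ++ x ++ y ++ z ++ wb x ++ wb (P n)).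
Proof.
have [bet Ebet] : exists bet, wpow v e ++ x ++ y ++ z = x ++ bet.
  have /prefixP[r Er] := pref_vplus_wpow_cat e x_pref.
  by exists (r ++ y ++ z); rewrite catA Er -catA.
have [x1 [al [Ex sal]]] : exists x1 al, x = x1 ++ al /\ size al = kappa.
  exists (take (size x - kappa) x), (drop (size x - kappa) x).
  by rewrite cat_take_drop size_drop subKn.
exists (P n ++ x1), al, bet; split; [|split].
- have -> : wpow v e ++ x ++ y ++ z ++ wb x ++ wb (P n) = x ++ bet ++ wb x ++ wb (P n).
    by rewrite [RHS]catA -Ebet -!catA.
  by rewrite Ex !wbar_cat -!catA.
- by rewrite sal.
- have al_x : wb al = take kappa (wb x) by rewrite Ex wbar_cat take_size_cat ?size_wbar.
  left; rewrite /L1 -!catA (catA x1) -Ex (catA x) -Ebet al_x -!catA !dot_cat q01_w0.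
  by rewrite !(dot_wpow _ p1_v) -(dot_cat t1 p1 x y) xyz_d1.
Qed.

Lemma Hk_pumped_down : regular H -> exists a, #|Q1| + #|Q2| <= a /\ H (P a ++ T ++ wb (P a)).
Proof.
move=> regH; have [a [e [le_a pump]]] := regular_pump w0 v (#|Q1| + #|Q2|) regH.
exists a; split=> //; rewrite -catA; apply: pump.
have E : wb (P a.+1) = wb v ++ wb (P a).
  by rewrite wbar_cat wbar_wpow wpowS -catA [in RHS]wbar_cat wbar_wpow.
by move: (pumped_in_H a.+1 e); rewrite E wpowD -!catA.
Qed.

Section Factor.
Variables (a : nat) (ga al be : seq Sigma).
Hypotheses (EZ : P a ++ T ++ wb (P a) = ga ++ al ++ be ++ wb al ++ wb ga)
  (kappa_al : kappa <= size al).

Lemma not_L1_factor : #|Q1| <= a -> ~ L1 t1 q01 F1 (ga ++ al ++ be ++ wb al).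
Proof.
move=> le_a accW.
have rest_avoids :
    avoids t1 F1 (dot t1 q01 (P a ++ x ++ y ++ z)) kappa (wb x ++ wb v ++ wb (P a)).
  rewrite !dot_cat q01_w0 (dot_wpow _ p1_v) -(dot_cat t1 p1 x y) xyz_d1.
  rewrite wbar_cat wbar_wpow (catA (wb v)) -wpowS -(subnKC (leqW le_a)).
  exact: d1_avoids_tail.
have EZ' : (P a ++ x ++ y ++ z) ++ wb x ++ wb v ++ wb (P a) =
    ga ++ al ++ be ++ wb al ++ wb ga by rewrite -EZ -!catA.
have W_pref : prefix (ga ++ al ++ be ++ wb al)
    ((P a ++ x ++ y ++ z) ++ wb x ++ wb v ++ wb (P a)) by rewrite EZ' !catA prefix_prefix.
have le_W := accepting_prefix_size rest_avoids W_pref accW.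
have le_m : size (P a) + (size x + size v) <= size ga + size al.
  by move: le_W (congr1 size EZ); rewrite !(size_cat, size_wbar); lia.
have [mirror sT] := Hk_mirror EZ le_m; rewrite !(size_cat, size_wbar) in sT.
have le_k : (size (x ++ y)).+1 <= size x + size v by rewrite size_cat; lia.
have le_kz : (size (x ++ y)).+1 <= size (x ++ y ++ z) by rewrite !size_cat; lia.
apply: (xy_maximal (prefix_take _ (size (x ++ y)).+1)); first by rewrite size_takel.
have -> : take (size (x ++ y)).+1 (x ++ y ++ z) = take (size (x ++ y)).+1 (wb T).
  rewrite -[RHS](take_takel _ le_k) -mirror take_takel //.
  have -> : T = (x ++ y ++ z) ++ wb x ++ wb v by rewrite -!catA.
  by rewrite [RHS]takel_cat.
by rewrite !wbar_cat !wbarK -!catA; apply: pref_vplus_take; rewrite // addnC.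
Qed.

Lemma L2_factor : #|Q2| <= a -> L2 bar t2 q02 F2 (al ++ be ++ wb al ++ wb ga) ->
  exists mu delta beta,
    T = mu ++ delta ++ beta ++ wb delta ++ wb mu /\ size delta = kappa /\
    F2 (dot t2 p2 (mu ++ delta ++ wb beta ++ wb delta)).
Proof.
move=> le_a; rewrite /L2 !wbar_cat !wbarK -!catA => accW.
have EZb : (P a ++ wb T) ++ wb (P a) = ga ++ al ++ wb be ++ wb al ++ wb ga.
  by apply: (can_inj wbarK); move: EZ; rewrite !wbar_cat !wbarK -!catA.
have pre_e2 : dot t2 q02 (P a ++ wb T) = e2.
  by rewrite !wbar_cat !wbarK !dot_cat q02_w0 (dot_wpow _ p2_v) p2_v xz_d2 /e2 dot_cat.
have rest_avoids : avoids t2 F2 (dot t2 q02 (P a ++ wb T)) 0 (wb (P a)).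
  by rewrite pre_e2 wbar_cat wbar_wpow -(subnKC le_a); exact: e2_avoids_tail.
have W_pref : prefix (ga ++ al ++ wb be ++ wb al) ((P a ++ wb T) ++ wb (P a)).
  by rewrite EZb !catA prefix_prefix.
have le_P : size (P a) <= size ga.
  move: (accepting_prefix_size rest_avoids W_pref accW) (congr1 size EZ).
  by rewrite !(size_cat, size_wbar); lia.
have [g [Ega ET]] := Hk_peel EZ le_P.
have [de [be' [sde [ET' EW]]]] := Hk_trim g be kappa_al.
exists g, de, be'; rewrite ET ET' -EW; do !split=> //.
by rewrite Ega -catA dot_cat (dot_cat t2 q02 w0) q02_w0 (dot_wpow _ p2_v) in accW.
Qed.

End Factor.

Lemma palindromic_factorization : regular H ->
  exists mu delta beta,
    T = mu ++ delta ++ beta ++ wb delta ++ wb mu /\ size delta = kappa /\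
    F2 (dot t2 p2 (mu ++ delta ++ wb beta ++ wb delta)).
Proof.
move=> regH; have [a [le_a [ga [al [be [EZ [kappa_al accW]]]]]]] := Hk_pumped_down regH.
case: accW => [accL1 | accL2].
  by case: (not_L1_factor EZ kappa_al (leq_trans (leq_addr _ _) le_a) accL1).
exact: L2_factor EZ kappa_al (leq_trans (leq_addl _ _) le_a) accL2.
Qed.

End Factorization.

End Words.

Theorem lemma7
  (Sigma : finType) (bar : Sigma -> Sigma)
  (Hbar : involutive bar) (HSigma : 1 < #|Sigma|)
  (kappa : nat) (Hkappa : 0 < kappa)
  (Q1 Q2 : finType) (t1 : Q1 -> Sigma -> Q1) (t2 : Q2 -> Sigma -> Q2)
  (q01 : Q1) (q02 : Q2) (F1 : pred Q1) (F2 : pred Q2)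
  (ord : rel (St Q1 Q2))
  (Hord_total : total ord) (Hord_trans : transitive ord)
  (Hord_anti : antisymmetric ord)
  (s : St Q1 Q2 -> Prop)
  (Hs : nontrivial_scc bar kappa t1 t2 q01 q02 F1 F2 s)
  (p1 : Q1) (p2 : Q2) (q1 : Q1) (q2 : Q2)
  (HAs : s (mkSt p1 p2 q1 q2 0))
  (HAs_least : forall B, s B -> ord (mkSt p1 p2 q1 q2 0) B)
  (v : seq Sigma)
  (Hv : shortest_loop bar kappa t1 t2 q01 q02 F1 F2 (mkSt p1 p2 q1 q2 0) v)
  (Hham : hamiltonian_loop bar kappa t1 t2 q01 q02 F1 F2 s (mkSt p1 p2 q1 q2 0) v)
  (x y z : seq Sigma) (d1 : Q1) (d2 : Q2)
  (H1 : kappa <= size x < size v + kappa /\ pref_vplus v x)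
  (H2 : size y < size v /\ pref_vplus v (x ++ y) /\
        forall u, prefix u (x ++ y ++ z) -> size (x ++ y) < size u ->
          ~ pref_vplus v u)
  (H3 : inB bar t1 t2 (dot t1 p1 (x ++ y)) (dot t2 p2 x) d1 d2 z)
  (H4 : let u := wbar bar x ++ wpow (wbar bar v) #|Q1| in
        q1 = dot t1 d1 u /\
        F1 (dot t1 d1 (take kappa u)) /\
        forall k, kappa < k <= size u -> ~~ F1 (dot t1 d1 (take k u)))
  (H5 : let e2 := dot t2 d2 (wbar bar y ++ wbar bar x) in
        let u := wpow (wbar bar v) #|Q2| in
        q2 = dot t2 e2 u /\
        forall k, 0 < k <= size u -> ~~ F2 (dot t2 e2 (take k u))) :
  regular (Hk bar kappa (L1 t1 q01 F1) (L2 bar t2 q02 F2)) ->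
  exists mu delta beta,
    x ++ y ++ z ++ wbar bar x ++ wbar bar v =
      mu ++ delta ++ beta ++ wbar bar delta ++ wbar bar mu /\
    size delta = kappa /\
    F2 (dot t2 p2 (mu ++ delta ++ wbar bar beta ++ wbar bar delta)).
Proof.
move=> regH.
case: Hham => ss [loop _].
have [P [EA [Pv [q1_avoids_v q2_avoids_v]]]] := rpath_level0 (tpathS_rpath loop).
case: EA => EP q1_v q2_v; rewrite -EP in Pv; case: Pv => p1_v p2_v.
case: Hs => [[A [_ [_ s_iff]]] _].
have [[_ [[I [w0 [[_ [q1' [q2' EI]]] init_path]]] _]] _] := proj1 (s_iff _) HAs.
rewrite {}EI in init_path.
have [P0 [EA0 [P0w0 [q1_avoids_w0 q2_avoids_w0]]]] := rpath_level0 init_path.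
case: EA0 => EP0 _ _; rewrite -EP0 in P0w0; case: P0w0 => q01_w0 q02_w0.
case: H1 => /andP[kappa_x _] x_pref; case: H2 => y_v [_ xy_maximal].
case: H3 => xyz_d1 xz_d2; case: H4 => d1_q1 [d1_accepts d1_avoids]; case: H5 => e2_q2 e2_avoids.
rewrite takel_cat ?size_wbar // in d1_accepts.
exact: (palindromic_factorization Hbar q01_w0 q02_w0 p1_v p2_v (esym q1_v) (esym q2_v)
  q1_avoids_v q2_avoids_v q1_avoids_w0 q2_avoids_w0 kappa_x x_pref y_v xy_maximal
  xyz_d1 xz_d2 (esym d1_q1) d1_accepts d1_avoids (esym e2_q2) e2_avoids regH).
Qed.
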